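(* Let $\mathbb{B}$ be a sized CPO with size ordinal $\zeta_{\mathbb{B}}$ and set of maximal elements $B$, let $S$ be a set, $h:S\times B^m\to B$ and $g_i:S\to S$ ($i=1,\ldots,m$). Suppose that for each $x\in S$, $\eta_h^x:\mathrm{On}(\zeta_{\mathbb{B}})^m\to\mathrm{On}(\zeta_{\mathbb{B}})$ is a production function for $\bar y\mapsto h(x,\bar y)$, and that $\eta_h^x(\alpha_1,\ldots,\alpha_m)>\min_{i=1,\ldots,m}\alpha_i$ for each $x\in S$ and all $\alpha_1,\ldots,\alpha_m\le\zeta_{\mathbb{B}}$ such that $\alpha_k<\zeta_{\mathbb{B}}$ for some $1\le k\le m$. Then there exists a unique function $f:S\to B$ satisfying $f(x)=h(x,f(g_1(x)),\ldots,f(g_m(x)))$ for all $x\in S$.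
   Context: A CPO is a partial order with a least element in which every directed set has a supremum; continuity means preservation of directed suprema; products are ordered componentwise. $\mathrm{On}(\zeta)$ is the set of ordinals $\le\zeta$. A sized CPO is a tuple $\langle\mathbb{B},\zeta,s,\mathtt{cut}\rangle$ where $\mathbb{B}$ is a CPO, $\zeta$ an ordinal, $s:\mathbb{B}\to\mathrm{On}(\zeta)$, $\mathtt{cut}:\mathrm{On}(\zeta)\times\mathbb{B}\to\mathbb{B}$, such that: $s$ is surjective and continuous; $s(x)=\zeta$ iff $x$ is maximal; $\mathtt{cut}$ is monotone in both arguments; $s(\mathtt{cut}(\alpha,x))=\alpha$ if $s(x)>\alpha$; $\mathtt{cut}(\alpha,x)=x$ if $s(x)\le\alpha$. A function between CPOs is regular if it is monotone and maps maximal elements to maximal elements. A production function for a function $f:B^m\to B$ (between sets of maximal elements) is any $\eta:\mathrm{On}(\zeta_{\mathbb{B}})^m\to\mathrm{On}(\zeta_{\mathbb{B}})$ such that there is a regular $f^*:\mathbb{B}^m\to\mathbb{B}$ extending $f$ with $\eta(s(y_1),\ldots,s(y_m))=s(f^*(y_1,\ldots,y_m))$ for all $y_i\in\mathbb{B}$. *)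

From mathcomp Require Import all_boot.
Set Implicit Arguments. Unset Strict Implicit. Unset Printing Implicit Defensive.

Definition directed {T : Type} (le : T -> T -> Prop) (D : T -> Prop) : Prop :=
  (exists x, D x) /\
  (forall x y, D x -> D y -> exists z, D z /\ le x z /\ le y z).

Definition is_sup {T : Type} (le : T -> T -> Prop) (D : T -> Prop) (u : T) : Prop :=
  (forall x, D x -> le x u) /\ (forall v, (forall x, D x -> le x v) -> le u v).

Definition maximal {T : Type} (le : T -> T -> Prop) (x : T) : Prop :=
  forall y, le x y -> y = x.

Definition monotone {T U : Type} (leT : T -> T -> Prop) (leU : U -> U -> Prop)
  (f : T -> U) : Prop := forall x y, leT x y -> leU (f x) (f y).

Definition continuous_map {T U : Type} (leT : T -> T -> Prop) (leU : U -> U -> Prop)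
  (f : T -> U) : Prop :=
  forall (D : T -> Prop) (d : T), directed leT D -> is_sup leT D d ->
    is_sup leU (fun u => exists x, D x /\ f x = u) (f d).

Record CPO := {
  cpo_car :> Type;
  cpo_le : cpo_car -> cpo_car -> Prop;
  cpo_refl : forall x, cpo_le x x;
  cpo_trans : forall x y z, cpo_le x y -> cpo_le y z -> cpo_le x z;
  cpo_antisym : forall x y, cpo_le x y -> cpo_le y x -> x = y;
  cpo_bot : cpo_car;
  cpo_bot_least : forall x, cpo_le cpo_bot x;
  cpo_dsup : forall D, directed cpo_le D -> exists u, is_sup cpo_le D u
}.

(* ---------- On(zeta): the ordinals <= zeta ----------
   Represented (up to isomorphism) as a well-ordered set with a greatest
   element zeta; every such set is order-isomorphic to On(zeta) for a unique
   ordinal zeta, and conversely. *)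
Record OrdSeg := {
  on_car :> Type;
  on_le : on_car -> on_car -> Prop;
  on_refl : forall a, on_le a a;
  on_trans : forall a b c, on_le a b -> on_le b c -> on_le a c;
  on_antisym : forall a b, on_le a b -> on_le b a -> a = b;
  on_total : forall a b, on_le a b \/ on_le b a;
  on_wf : forall P : on_car -> Prop, (exists a, P a) ->
            exists a, P a /\ forall b, P b -> on_le a b;
  on_zeta : on_car;
  on_zeta_top : forall a, on_le a on_zeta
}.

Definition on_lt (O : OrdSeg) (a b : O) : Prop := on_le a b /\ a <> b.

Record SizedCPO := {
  sz_B : CPO;
  sz_On : OrdSeg;
  sz_s : sz_B -> sz_On;
  sz_cut : sz_On -> sz_B -> sz_B;
  sz_s_surj : forall a : sz_On, exists x, sz_s x = a;
  sz_s_cont : continuous_map (@cpo_le sz_B) (@on_le sz_On) sz_s;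
  sz_s_zeta : forall x, sz_s x = on_zeta sz_On <-> maximal (@cpo_le sz_B) x;
  sz_cut_mono : forall a b x y, on_le a b -> cpo_le x y ->
                  cpo_le (sz_cut a x) (sz_cut b y);
  sz_cut_s : forall a x, on_lt a (sz_s x) -> sz_s (sz_cut a x) = a;
  sz_cut_id : forall a x, on_le (sz_s x) a -> sz_cut a x = x
}.

Definition maxel (BB : SizedCPO) : Type :=
  {x : sz_B BB | maximal (@cpo_le (sz_B BB)) x}.

Definition prod_le (BB : SizedCPO) (m : nat) (y z : 'I_m -> sz_B BB) : Prop :=
  forall i, cpo_le (y i) (z i).

Definition regular (BB : SizedCPO) (m : nat) (F : ('I_m -> sz_B BB) -> sz_B BB) : Prop :=
  monotone (@prod_le BB m) (@cpo_le (sz_B BB)) F /\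
  (forall y, maximal (@prod_le BB m) y -> maximal (@cpo_le (sz_B BB)) (F y)).

Definition production_function (BB : SizedCPO) (m : nat)
  (f : ('I_m -> maxel BB) -> maxel BB) (eta : ('I_m -> sz_On BB) -> sz_On BB) : Prop :=
  exists F : ('I_m -> sz_B BB) -> sz_B BB,
    regular F /\
    (forall y : 'I_m -> maxel BB, F (fun i => sval (y i)) = sval (f y)) /\
    (forall y : 'I_m -> sz_B BB, eta (fun i => sz_s (y i)) = sz_s (F y)).

From mathcomp Require Import all_boot.
From Stdlib Require Import Classical ClassicalEpsilon ProofIrrelevance
  FunctionalExtensionality PropExtensionality.
Set Implicit Arguments. Unset Strict Implicit.

(* Let [F_x] be the regular extension of [h(x,-)] witnessing the production
   function [eta x].  Iterate [q |-> (x |-> F_x (q (g_1 x), ..., q (g_m x)))]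
   transfinitely along On(zeta), starting from bottom and taking suprema of the
   chain of earlier stages.  The hypothesis on [eta] forces the stage of index
   [a] to have size at least [a] at every point, so stage [zeta] is maximal
   everywhere, hence a fixed point.  Any solution [f'] is a fixed point as well,
   so stage [zeta] lies below it, and maximality makes the two equal. *)

Definition chain (T : Type) (le : T -> T -> Prop) (E : T -> Prop) : Prop :=
  forall a b, E a -> E b -> le a b \/ le b a.

Lemma chain_directed (B : CPO) (E : B -> Prop) :
  (exists a, E a) -> chain (@cpo_le B) E -> directed (@cpo_le B) E.
Proof.
  intros Hne Hc. split; [exact Hne|].
  intros a b Ha Hb. destruct (Hc a b Ha Hb) as [H|H].
  - exists b. auto using cpo_refl.
  - exists a. auto using cpo_refl.
Qed.

Lemma chain_has_sup (B : CPO) (E : B -> Prop) :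
  chain (@cpo_le B) E -> exists u, is_sup (@cpo_le B) E u.
Proof.
  intro Hc. destruct (classic (exists a, E a)) as [Hne|Hempty].
  - exact (cpo_dsup (chain_directed Hne Hc)).
  - exists (cpo_bot B). split.
    + intros x Hx. exfalso. eauto.
    + intros v _. apply cpo_bot_least.
Qed.

Definition sup (B : CPO) (E : B -> Prop) : B :=
  epsilon (inhabits (cpo_bot B)) (is_sup (@cpo_le B) E).

Lemma sup_spec (B : CPO) (E : B -> Prop) :
  (exists u, is_sup (@cpo_le B) E u) -> is_sup (@cpo_le B) E (sup E).
Proof. apply epsilon_spec. Qed.

Section FunCPO.
Variables (S : Type) (B : CPO).

Definition fun_le (p q : S -> B) : Prop := forall x, cpo_le (p x) (q x).

Definition eval_set (D : (S -> B) -> Prop) (x : S) : B -> Prop :=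
  fun b => exists q, D q /\ q x = b.

Lemma directed_eval_set (D : (S -> B) -> Prop) (x : S) :
  directed fun_le D -> directed (@cpo_le B) (eval_set D x).
Proof.
  intros [[q Hq] Hdir]. split; [exists (q x), q; auto|].
  intros a b [p [Hp <-]] [r [Hr <-]].
  destruct (Hdir p r Hp Hr) as [z [Hz [Hpz Hrz]]].
  exists (z x). repeat split; auto. exists z; auto.
Qed.

Lemma fun_dsup (D : (S -> B) -> Prop) :
  directed fun_le D -> exists u, is_sup fun_le D u.
Proof.
  intro Hd. exists (fun x => sup (eval_set D x)).
  have Hsup x := sup_spec (cpo_dsup (directed_eval_set x Hd)).
  split.
  - intros q Hq x. apply (proj1 (Hsup x)). exists q; auto.
  - intros v Hv x. apply (proj2 (Hsup x)). intros b [q [Hq <-]]. apply Hv, Hq.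
Qed.

Definition fun_cpo : CPO :=
  {| cpo_car := S -> B;
     cpo_le := fun_le;
     cpo_refl := fun p x => cpo_refl (p x);
     cpo_trans := fun p q r Hpq Hqr x => cpo_trans (Hpq x) (Hqr x);
     cpo_antisym := fun p q Hpq Hqp =>
       functional_extensionality p q (fun x => cpo_antisym (Hpq x) (Hqp x));
     cpo_bot := fun _ => cpo_bot B;
     cpo_bot_least := fun p x => cpo_bot_least (p x);
     cpo_dsup := fun_dsup |}.

End FunCPO.

Lemma on_lt_wf (O : OrdSeg) : well_founded (@on_lt O).
Proof.
  intro a. apply NNPP. intro Ha.
  destruct (@on_wf O (fun a => ~ Acc (@on_lt O) a) (ex_intro _ a Ha))
    as [a0 [Hacc Hmin]].
  apply Hacc. constructor. intros b [Hba Hne]. apply NNPP. intro Hb.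
  apply Hne, on_antisym; auto.
Qed.

Lemma on_lt_le_trans (O : OrdSeg) (c b a : O) : on_lt c b -> on_le b a -> on_lt c a.
Proof.
  intros [Hcb Hne] Hba. split; [eapply on_trans; eauto|].
  intros ->. apply Hne, on_antisym; auto.
Qed.

Lemma on_not_lt_le (O : OrdSeg) (a b : O) : ~ on_lt b a -> on_le a b.
Proof.
  intro Hn. destruct (on_total a b) as [H|H]; auto.
  destruct (classic (b = a)) as [->|Hne]; [apply on_refl|].
  exfalso. apply Hn. split; auto.
Qed.

Lemma progressive_of_gt_min (O : OrdSeg) (m : nat) (eta : ('I_m -> O) -> O) :
  eta (fun _ => on_zeta O) = on_zeta O ->
  (forall alpha : 'I_m -> O,
     (exists k, on_lt (alpha k) (on_zeta O)) ->
     forall mu, (exists i, alpha i = mu) -> (forall i, on_le mu (alpha i)) ->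
       on_lt mu (eta alpha)) ->
  forall (a : O) (alpha : 'I_m -> O),
    (forall c, on_lt c a -> forall i, on_le c (alpha i)) -> on_le a (eta alpha).
Proof.
  intros Hzeta Hmin a alpha Hbelow.
  destruct (classic (exists k, on_lt (alpha k) (on_zeta O))) as [[k Hk]|Hall].
  - destruct (@on_wf O (fun mu => exists i, alpha i = mu) (ex_intro _ _ (ex_intro _ k erefl)))
      as [mu [[i0 Hi0] Hmu]].
    have [Hmu_le Hmu_ne] := Hmin alpha (ex_intro _ k Hk) mu (ex_intro _ i0 Hi0)
                              (fun i => Hmu _ (ex_intro _ i erefl)).
    apply on_not_lt_le. intro Hlt.
    apply Hmu_ne, on_antisym; auto. rewrite <- Hi0. exact (Hbelow _ Hlt i0).
  - replace alpha with (fun _ : 'I_m => on_zeta O).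
    + rewrite Hzeta. apply on_zeta_top.
    + apply functional_extensionality. intro i.
      apply on_antisym; [|apply on_zeta_top].
      apply on_not_lt_le. intro Hi. apply Hall. eauto.
Qed.

Section TransfiniteIteration.
Variables (T : CPO) (O : OrdSeg) (Phi : T -> T).
Hypothesis Phi_mono : monotone (@cpo_le T) (@cpo_le T) Phi.

Definition tf_iter : O -> T :=
  Fix (@on_lt_wf O) (fun _ => T)
    (fun a rec => Phi (sup (fun q => exists b (H : on_lt b a), rec b H = q))).

Definition tf_iter_below (a : O) : T -> Prop :=
  fun q => exists b, on_lt b a /\ tf_iter b = q.

Lemma tf_iter_eq (a : O) : tf_iter a = Phi (sup (tf_iter_below a)).
Proof.
  unfold tf_iter_below, tf_iter. rewrite Fix_eq.
  - do 2 f_equal. apply functional_extensionality. intro q.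
    apply propositional_extensionality. split.
    + intros [b [H e]]. eauto.
    + intros [b [H e]]. eauto.
  - intros b r r' Hrr'. do 2 f_equal.
    apply functional_extensionality. intro q. apply propositional_extensionality.
    split; intros [c [H e]]; exists c, H; [rewrite <- Hrr'|rewrite Hrr']; exact e.
Qed.

Lemma tf_iter_below_chain (a : O) :
  (forall b c, on_lt b a -> on_le c b -> cpo_le (tf_iter c) (tf_iter b)) ->
  chain (@cpo_le T) (tf_iter_below a).
Proof.
  intros Hmono p q [b [Hb <-]] [c [Hc <-]].
  destruct (on_total b c); [left|right]; apply Hmono; auto.
Qed.

Lemma tf_iter_mono (a b : O) : on_le b a -> cpo_le (tf_iter b) (tf_iter a).
Proof.
  revert b. induction a as [a IH] using (well_founded_induction (@on_lt_wf O)).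
  intros b Hba. destruct (classic (b = a)) as [->|Hne]; [apply cpo_refl|].
  have Hchain a' : on_le a' a -> chain (@cpo_le T) (tf_iter_below a').
  { intro Ha'. apply tf_iter_below_chain. intros c d Hc Hdc.
    apply IH; auto. eapply on_lt_le_trans; eauto. }
  have [_ Hleast] := sup_spec (chain_has_sup (Hchain b Hba)).
  have [Hub _] := sup_spec (chain_has_sup (Hchain a (on_refl _))).
  rewrite (tf_iter_eq a) (tf_iter_eq b). apply Phi_mono, Hleast.
  intros q [c [Hc <-]]. apply Hub. exists c. split; auto.
  eapply on_lt_le_trans; eauto.
Qed.

Lemma tf_iter_sup_spec (a : O) :
  is_sup (@cpo_le T) (tf_iter_below a) (sup (tf_iter_below a)).
Proof.
  apply sup_spec, chain_has_sup, tf_iter_below_chain.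
  intros b c _. apply tf_iter_mono.
Qed.

Lemma tf_iter_le_step (a : O) : cpo_le (tf_iter a) (Phi (tf_iter a)).
Proof.
  rewrite {1}(tf_iter_eq a). apply Phi_mono, (proj2 (tf_iter_sup_spec a)).
  intros q [b [Hb <-]]. apply tf_iter_mono, Hb.
Qed.

Lemma tf_iter_le_prefixed (p : T) :
  cpo_le (Phi p) p -> forall a : O, cpo_le (tf_iter a) p.
Proof.
  intros Hp a. induction a as [a IH] using (well_founded_induction (@on_lt_wf O)).
  rewrite (tf_iter_eq a). apply cpo_trans with (Phi p); [|exact Hp].
  apply Phi_mono, (proj2 (tf_iter_sup_spec a)).
  intros q [b [Hb <-]]. apply IH, Hb.
Qed.

End TransfiniteIteration.

Lemma sz_s_mono (BB : SizedCPO) (x y : sz_B BB) :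
  cpo_le x y -> on_le (sz_s x) (sz_s y).
Proof.
  intro Hxy.
  have Hdir : directed (@cpo_le (sz_B BB)) (fun u => u = x \/ u = y).
  { split; [exists x; auto|].
    intros u v Hu Hv. exists y.
    destruct Hu as [->| ->]; destruct Hv as [->| ->]; auto using cpo_refl. }
  have Hsup : is_sup (@cpo_le (sz_B BB)) (fun u => u = x \/ u = y) y.
  { split; [intros u [->| ->]; auto using cpo_refl|]. intros v Hv. apply Hv; auto. }
  apply (proj1 (sz_s_cont Hdir Hsup)). exists x; auto.
Qed.

Section SizedIteration.
Variables (BB : SizedCPO) (m : nat) (S : Type) (g : 'I_m -> S -> S).
Variables (F : S -> ('I_m -> sz_B BB) -> sz_B BB) (eta : S -> ('I_m -> sz_On BB) -> sz_On BB).
Hypothesis F_regular : forall x, regular (F x).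
Hypothesis eta_size : forall x y, eta x (fun i => sz_s (y i)) = sz_s (F x y).
Hypothesis eta_gt_min : forall x (alpha : 'I_m -> sz_On BB),
  (exists k, on_lt (alpha k) (on_zeta (sz_On BB))) ->
  forall mu, (exists i, alpha i = mu) -> (forall i, on_le mu (alpha i)) ->
    on_lt mu (eta x alpha).

Definition step (q : S -> sz_B BB) : S -> sz_B BB := fun x => F x (fun i => q (g i x)).

Local Notation stage := (@tf_iter (fun_cpo S (sz_B BB)) (sz_On BB) step).

Lemma step_mono : monotone (@cpo_le (fun_cpo S (sz_B BB))) (@cpo_le (fun_cpo S (sz_B BB))) step.
Proof. intros p q Hpq x. apply (proj1 (F_regular x)). intro i. apply Hpq. Qed.

Lemma eta_zeta (x : S) : eta x (fun _ => on_zeta (sz_On BB)) = on_zeta (sz_On BB).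
Proof.
  have [top Htop] := sz_s_surj (on_zeta (sz_On BB)).
  have Hmax : maximal (@prod_le BB m) (fun _ => top).
  { intros y Hy. apply functional_extensionality. intro i.
    apply (proj1 (sz_s_zeta top) Htop), Hy. }
  rewrite <- Htop, (eta_size x (fun _ => top)), Htop.
  apply (proj2 (sz_s_zeta _)), (proj2 (F_regular x)), Hmax.
Qed.

Lemma size_tf_iter (a : sz_On BB) (x : S) :
  on_le a (sz_s (stage a x)).
Proof.
  revert x. induction a as [a IH] using (well_founded_induction (@on_lt_wf (sz_On BB))).
  intro x. rewrite (@tf_iter_eq (fun_cpo S (sz_B BB)) _ step a) /step -eta_size.
  apply (progressive_of_gt_min (eta_zeta x) (eta_gt_min x)).
  intros c Hc i. apply on_trans with (sz_s (stage c (g i x))).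
  - apply IH, Hc.
  - apply sz_s_mono, (proj1 (tf_iter_sup_spec step_mono a)). exists c; auto.
Qed.

Lemma tf_iter_zeta_maximal (x : S) :
  maximal (@cpo_le (sz_B BB)) (stage (on_zeta (sz_On BB)) x).
Proof.
  apply (proj1 (sz_s_zeta _)), on_antisym; [apply on_zeta_top|apply size_tf_iter].
Qed.

End SizedIteration.

Lemma production_functions_choice (BB : SizedCPO) (m : nat) (S : Type)
  (h : S -> ('I_m -> maxel BB) -> maxel BB) (eta : S -> ('I_m -> sz_On BB) -> sz_On BB) :
  (forall x, production_function (h x) (eta x)) ->
  exists F : S -> ('I_m -> sz_B BB) -> sz_B BB,
    forall x, regular (F x) /\
      (forall y : 'I_m -> maxel BB, F x (fun i => sval (y i)) = sval (h x y)) /\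
      (forall y, eta x (fun i => sz_s (y i)) = sz_s (F x y)).
Proof. apply choice. Qed.

Lemma maxel_eq (BB : SizedCPO) (u v : maxel BB) : sval u = sval v -> u = v.
Proof. apply eq_sig_hprop. intros. apply proof_irrelevance. Qed.

Theorem corollary4p8 (BB : SizedCPO) (m : nat) (S : Type)
  (h : S -> ('I_m -> maxel BB) -> maxel BB) (g : 'I_m -> S -> S)
  (eta : S -> ('I_m -> sz_On BB) -> sz_On BB) :
  (forall x, production_function (h x) (eta x)) ->
  (forall x (alpha : 'I_m -> sz_On BB),
     (exists k, on_lt (alpha k) (on_zeta (sz_On BB))) ->
     forall mu, (exists i, alpha i = mu) -> (forall i, on_le mu (alpha i)) ->
       on_lt mu (eta x alpha)) ->
  exists f : S -> maxel BB,
    (forall x, f x = h x (fun i => f (g i x))) /\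
    (forall f' : S -> maxel BB, (forall x, f' x = h x (fun i => f' (g i x))) ->
       forall x, f' x = f x).
Proof.
  intros Hprod Heta.
  destruct (production_functions_choice Hprod) as [F HF].
  have F_regular x := proj1 (HF x).
  have F_ext x := proj1 (proj2 (HF x)).
  have eta_size x := proj2 (proj2 (HF x)).
  have Hmono := step_mono g F_regular.
  set fix_pt := @tf_iter (fun_cpo S (sz_B BB)) _ (step g F) (on_zeta (sz_On BB)).
  have Hmax := tf_iter_zeta_maximal (g := g) F_regular eta_size Heta.
  exists (fun x => exist _ (fix_pt x) (Hmax x)).
  split.
  - intro x. apply maxel_eq. rewrite /= -F_ext. symmetry.
    apply Hmax, (tf_iter_le_step Hmono).
  - intros f' Hf' x. apply maxel_eq, Hmax.
    have Hfix : fun_le (step g F (fun y => sval (f' y))) (fun y => sval (f' y)).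
    { intro y. rewrite /step (Hf' y) /= -F_ext. apply cpo_refl. }
    exact (tf_iter_le_prefixed Hmono Hfix _ x).
Qed.
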